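(* Let $\mathbb{F}$ be a field of characteristic different from $2$ and let $\mathcal{J}Spin_n(\mathbb{F})$ be the spin factor defined in the context. Then every 2-local inner derivation on $\mathcal{J}Spin_n(\mathbb{F})$ is a derivation.
   Context: $\mathcal{J}Spin_n(\mathbb{F})=\mathbb{F}\mathbf{1}\oplus V$, where $V$ is an $n$-dimensional $\mathbb{F}$-vector space with a symmetric bilinear form $f$ and a basis $\xi_1,\dots,\xi_n$ with $f(\xi_i,\xi_j)=0$ for $i\ne j$ and $f(\xi_i,\xi_i)=1$; the product is $(\alpha\mathbf{1}+x)\cdot(\beta\mathbf{1}+y)=(\alpha\beta+f(x,y))\mathbf{1}+(\beta x+\alpha y)$ for $\alpha,\beta\in\mathbb{F}$, $x,y\in V$. Thus with $s_i=\xi_i$ one has the basis $\{\mathbf{1},s_1,\dots,s_n\}$ with $s_i s_i=\mathbf{1}$, $s_is_j=0$ ($i\neq j$), $s_k\mathbf{1}=s_k$. A derivation is a linear map $D$ with $D(xy)=D(x)y+xD(y)$. An inner derivation is a map of the form $x\mapsto\sum_{k=1}^m\big(a_k(b_kx)-b_k(a_kx)\big)$ with $a_k,b_k$ in the algebra. A 2-local inner derivation is a map $\Delta$ (not assumed linear) such that for every $x,y$ there is an inner derivation $D$ with $\Delta(x)=D(x)$, $\Delta(y)=D(y)$. *)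

From mathcomp Require Import all_boot all_order all_algebra.
Set Implicit Arguments. Unset Strict Implicit. Unset Printing Implicit Defensive.
Import GRing.Theory.
Local Open Scope ring_scope.

(* The spin factor JSpin_n(F) = F 1 (+) V, dim V = n, with orthonormal basis
   xi_1..xi_n for the form f.  Elements are row vectors of length n+1:
   coordinate 0 is the coefficient of 1, coordinate (lift ord0 i) is the
   coefficient of xi_(i+1). *)
Definition JSpin (F : fieldType) (n : nat) := 'rV[F]_(n.+1).

Section Spin.
Variables (F : fieldType) (n : nat).

Definition jscal (x : JSpin F n) : F := x 0 ord0.
Definition jvec (x : JSpin F n) (i : 'I_n) : F := x 0 (lift ord0 i).
Definition jform (x y : JSpin F n) : F := \sum_(i < n) jvec x i * jvec y i.

Definition jmul (x y : JSpin F n) : JSpin F n :=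
  \row_(k < n.+1)
    (if unlift ord0 k is Some i
     then jscal y * jvec x i + jscal x * jvec y i
     else jscal x * jscal y + jform x y).

Definition is_derivation (D : JSpin F n -> JSpin F n) : Prop :=
  (forall (c : F) (x y : JSpin F n), D (c *: x + y) = c *: D x + D y) /\
  (forall x y : JSpin F n, D (jmul x y) = jmul (D x) y + jmul x (D y)).

Definition inner_der (ab : seq (JSpin F n * JSpin F n)) (x : JSpin F n)
  : JSpin F n :=
  \sum_(p <- ab) (jmul p.1 (jmul p.2 x) - jmul p.2 (jmul p.1 x)).

Definition is_2local_inner_derivation (Delta : JSpin F n -> JSpin F n) : Prop :=
  forall x y : JSpin F n, exists ab : seq (JSpin F n * JSpin F n),
    Delta x = inner_der ab x /\ Delta y = inner_der ab y.

End Spin.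

From mathcomp Require Import all_boot all_order all_algebra.
From mathcomp Require Import ring.
Set Implicit Arguments. Unset Strict Implicit. Unset Printing Implicit Defensive.
Import GRing.Theory.
Local Open Scope ring_scope.

(* An inner derivation [x |-> a(bx) - b(ax)] kills the scalar coordinate and is
   skew-adjoint for f; both facts concern at most two points at a time, so a
   2-local inner derivation Delta inherits them.  Skew-adjointness against the
   basis vectors xi_i gives the coordinates of Delta x as the linear functionals
   -f(x, Delta xi_i), so Delta is linear, and the Leibniz rule becomes a
   polynomial identity. *)

Section SpinFactor.
Variables (F : fieldType) (n : nat).
Implicit Types (a b x y z : JSpin F n).

Lemma jscalD x y : jscal (x + y) = jscal x + jscal y.
Proof. by rewrite /jscal mxE. Qed.

Lemma jscalB x y : jscal (x - y) = jscal x - jscal y.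
Proof. by rewrite /jscal !mxE. Qed.

Lemma jvecD x y i : jvec (x + y) i = jvec x i + jvec y i.
Proof. by rewrite /jvec mxE. Qed.

Lemma jvecB x y i : jvec (x - y) i = jvec x i - jvec y i.
Proof. by rewrite /jvec !mxE. Qed.

Lemma jvecZ c x i : jvec (c *: x) i = c * jvec x i.
Proof. by rewrite /jvec mxE. Qed.

Lemma jscal_mul x y : jscal (jmul x y) = jscal x * jscal y + jform x y.
Proof. by rewrite {1}/jscal /jmul mxE unlift_none. Qed.

Lemma jvec_mul x y i :
  jvec (jmul x y) i = jscal y * jvec x i + jscal x * jvec y i.
Proof. by rewrite {1}/jvec /jmul mxE liftK. Qed.

Lemma jformC x y : jform x y = jform y x.
Proof. by apply: eq_bigr => i _; rewrite mulrC. Qed.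

Lemma jformD x y z : jform (x + y) z = jform x z + jform y z.
Proof. by rewrite /jform -big_split; apply: eq_bigr => i _; rewrite jvecD mulrDl. Qed.

Lemma jformB x y z : jform (x - y) z = jform x z - jform y z.
Proof. by rewrite /jform -sumrB; apply: eq_bigr => i _; rewrite jvecB mulrBl. Qed.

Lemma jformZ c x z : jform (c *: x) z = c * jform x z.
Proof. by rewrite /jform mulr_sumr; apply: eq_bigr => i _; rewrite jvecZ mulrA. Qed.

Lemma jform0 z : jform 0 z = 0.
Proof. by rewrite /jform big1 // => i _; rewrite /jvec mxE mul0r. Qed.

Lemma jform_mul a x y :
  jform (jmul a x) y = jscal x * jform a y + jscal a * jform x y.
Proof.
rewrite /jform !mulr_sumr -big_split; apply: eq_bigr => i _.
by rewrite jvec_mul mulrDl !mulrA.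
Qed.

Lemma jform_suml I (s : seq I) (f : I -> JSpin F n) y :
  jform (\sum_(p <- s) f p) y = \sum_(p <- s) jform (f p) y.
Proof. exact: (big_morph _ (fun x z => jformD x z y) (jform0 y)). Qed.

Definition jbasis (i : 'I_n) : JSpin F n := delta_mx 0 (lift ord0 i).

Lemma jform_basis x i : jform x (jbasis i) = jvec x i.
Proof.
rewrite /jform (bigD1 i) //= big1 => [|j neq_ji].
  by rewrite /jvec /jbasis mxE !eqxx mulr1 addr0.
by rewrite /jvec /jbasis mxE /= (inj_eq (@lift_inj _ ord0)) (negbTE neq_ji) mulr0.
Qed.

Definition jcomm a b x : JSpin F n := jmul a (jmul b x) - jmul b (jmul a x).

Lemma jscal_comm a b x : jscal (jcomm a b x) = 0.
Proof.
rewrite jscalB !jscal_mul (jformC a (jmul b x)) (jformC b (jmul a x)) !jform_mul.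
rewrite (jformC b a) (jformC x a) (jformC x b); ring.
Qed.

Lemma jform_comm a b x y : jform (jcomm a b x) y = - jform x (jcomm a b y).
Proof.
by rewrite (jformC x) !jformB !jform_mul !jscal_mul (jformC y x); ring.
Qed.

Lemma jscal_inner_der ab x : jscal (inner_der ab x) = 0.
Proof.
rewrite /inner_der; apply: (big_ind (fun v => jscal v = 0)).
- by rewrite /jscal mxE.
- by move=> u v u0 v0; rewrite jscalD u0 v0 addr0.
- by move=> [a b] _; apply: jscal_comm.
Qed.

Lemma jform_inner_der ab x y :
  jform (inner_der ab x) y = - jform x (inner_der ab y).
Proof.
rewrite /inner_der jform_suml [jform x _]jformC jform_suml -sumrN.
by apply: eq_bigr => -[a b] _; rewrite [jform _ x]jformC; apply: jform_comm.
Qed.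

Section SkewAdjoint.
Variable D : JSpin F n -> JSpin F n.
Hypothesis jscal_D : forall x, jscal (D x) = 0.
Hypothesis jform_D : forall x y, jform (D x) y = - jform x (D y).

Lemma jvec_skew x i : jvec (D x) i = - jform x (D (jbasis i)).
Proof. by rewrite -jform_basis jform_D. Qed.

Lemma skew_is_derivation : is_derivation D.
Proof.
have scalE (v : JSpin F n) : v 0 ord0 = jscal v by [].
have vecE (v : JSpin F n) i : v 0 (lift ord0 i) = jvec v i by [].
split=> [c x y | x y]; apply/rowP => k; case: (unliftP ord0 k) => [i ->|->].
- by rewrite !mxE !vecE !jvec_skew jformD jformZ mulrN opprD.
- by rewrite !mxE !scalE !jscal_D mulr0 addr0.
- rewrite mxE !vecE !jvec_mul !jscal_D !jvec_skew jform_mul; ring.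
- by rewrite mxE !scalE !jscal_mul !jscal_D !mul0r !mulr0 !add0r jform_D addNr.
Qed.

End SkewAdjoint.

End SpinFactor.

Theorem theorem3p2 (F : fieldType) (n : nat) (hchar : (2 : F) != 0)
  (Delta : JSpin F n -> JSpin F n) :
  is_2local_inner_derivation Delta -> is_derivation Delta.
Proof.
move=> local; apply: skew_is_derivation => [x | x y].
  by have [ab [-> _]] := local x x; apply: jscal_inner_der.
by have [ab [-> ->]] := local x y; apply: jform_inner_der.
Qed.
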